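(* The set of finite factors of $\mathbf{t}_{3/2}$ and the set of finite factors of $\mathbf{t}'$ are each closed under reversal: if $u\in\{0,1\}^*$ is a factor of one of these words, then so is its reversal $u^R$.
   Context: Base-$3/2$ expansions: $\langle 0\rangle_{3/2}$ is the empty word, and for $n\ge 1$, writing $2n=3m+d$ with integers $m\ge0$, $d\in\{0,1,2\}$, set $\langle n\rangle_{3/2}=\langle m\rangle_{3/2}\,d$. The Thue--Morse word in base $3/2$ is $\mathbf{t}_{3/2}=(t_n)_{n\ge0}\in\{0,1\}^{\mathbb{N}}$ where $t_n$ is the digit sum of $\langle n\rangle_{3/2}$ modulo $2$; equivalently the unique binary sequence with $t_0=0$, $t_{3n}=t_{3n+1}=t_{2n}$, $t_{3n+2}=1-t_{2n+1}$. Dekking's word $\mathbf{t}'=(x_n)_{n\ge0}$ is the unique binary infinite word with $x_0=0$ such that $\mathbf{t}'=\beta(x_0x_1)\beta(x_2x_3)\cdots$ where $\beta(00)=\beta(01)=010$, $\beta(10)=\beta(11)=101$. The reversal of $a_1\cdots a_n$ is $a_n\cdots a_1$. *)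

From mathcomp Require Import all_boot.
Set Implicit Arguments. Unset Strict Implicit. Unset Printing Implicit Defensive.

(* Binary letters are encoded as bool: 0 = false, 1 = true. *)

(* Base-3/2 expansion <n>_{3/2} as a sequence of digits (most significant
   first).  <0> = [::], and for n >= 1 with 2n = 3m + d, <n> = <m> d.
   Computed with fuel: m < n whenever n >= 1, so fuel n suffices. *)
Fixpoint exp32_fuel (fuel n : nat) : seq nat :=
  match fuel with
  | 0 => [::]
  | f.+1 => if n == 0 then [::]
            else rcons (exp32_fuel f ((2 * n) %/ 3)) ((2 * n) %% 3)
  end.

Definition exp32 (n : nat) : seq nat := exp32_fuel n n.

Definition t32 (n : nat) : bool := odd (sumn (exp32 n)).

Definition beta (a b : bool) : seq bool :=
  match a, b with
  | false, false => [:: false; true; false]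
  | false, true  => [:: false; true; false]
  | true, false  => [:: true; false; true]
  | true, true   => [:: true; false; true]
  end.

(* x is Dekking's word: x_0 = 0 and x = beta(x0 x1) beta(x2 x3) ...,
   i.e. the k-th block of length 3 of x is beta(x_{2k} x_{2k+1}).
   Such a word exists and is unique. *)
Definition is_dekking (x : nat -> bool) : Prop :=
  x 0 = false /\
  forall k, [:: x (3 * k); x (3 * k + 1); x (3 * k + 2)] = beta (x (2 * k)) (x (2 * k + 1)).

Definition factor (w : nat -> bool) (u : seq bool) : Prop :=
  exists i, u = mkseq (fun j => w (i + j)) (size u).

From mathcomp Require Import all_boot.
From mathcomp Require Import zify.

(* Both words are closed under reversal because every prefix of them
   reappears reversed further on.  For t = t_{3/2}, the recursion
   t_n = t_{floor(2n/3)} + [n = 2 mod 3] shows that if t_{2w - p} = t_p for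
   all p <= floor(2m/3), then t_{3w + 1 - p} = t_p for all p <= m.  Because
   the old mirror point has to be even, the induction also prescribes the
   mirror point modulo an arbitrary power of 2.  Its base case, a zero of t in
   every residue class modulo 2^j, comes from the identity
   t_{n + 3^k e} + t_n = t_{2^k e} (n <= k) and 3^{2^j} = 1 mod 2^j.  Dekking's
   word is x_n = t_{floor(n/3)} + [n = 1 mod 3], so a mirror point S of t
   gives the mirror point 3S + 2 of x. *)

Lemma exp32_fuelE f g n : n <= f -> n <= g -> exp32_fuel f n = exp32_fuel g n.
Proof.
elim: f g n => [|f IH] [|g] [|n] //= le_nf le_ng.
by congr rcons; apply: IH; lia.
Qed.

(* [<n>_{3/2} = <parent32 n>_{3/2} d] for some digit d. *)
Definition parent32 n := (2 * n) %/ 3.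

Lemma t32_rec n : t32 n = t32 (parent32 n) (+) (n %% 3 == 2).
Proof.
case: n => [|n] //; rewrite /t32 /exp32 /= sumn_rcons oddD.
rewrite (@exp32_fuelE n (parent32 n.+1)); last 2 first.
- by rewrite /parent32; lia.
- by rewrite /parent32; lia.
congr (_ (+) _).
have : n.+1 %% 3 = 0 \/ n.+1 %% 3 = 1 \/ n.+1 %% 3 = 2 by lia.
case=> [|[|]] r; rewrite r.
- by have -> : (2 * n.+1) %% 3 = 0 by lia.
- by have -> : (2 * n.+1) %% 3 = 2 by lia.
- by have -> : (2 * n.+1) %% 3 = 1 by lia.
Qed.

Lemma t32_rec3 m : [/\ t32 (3 * m) = t32 (2 * m), t32 (3 * m + 1) = t32 (2 * m)
  & t32 (3 * m + 2) = ~~ t32 (2 * m + 1)].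
Proof.
rewrite !(t32_rec (3 * m + _)) (t32_rec (3 * m)) /parent32.
have -> : (2 * (3 * m)) %/ 3 = 2 * m by lia.
have -> : (2 * (3 * m + 1)) %/ 3 = 2 * m by lia.
have -> : (2 * (3 * m + 2)) %/ 3 = 2 * m + 1 by lia.
have -> : (3 * m) %% 3 = 0 by lia.
have -> : (3 * m + 1) %% 3 = 1 by lia.
have -> : (3 * m + 2) %% 3 = 2 by lia.
by rewrite /= !addbF addbT.
Qed.

Lemma t32_addn_mul3 n e :
  t32 (n + 3 * e) (+) t32 n = t32 (parent32 n + 2 * e) (+) t32 (parent32 n).
Proof.
rewrite (t32_rec (n + 3 * e)) (t32_rec n) addbACA /parent32.
have -> : (2 * (n + 3 * e)) %/ 3 = (2 * n) %/ 3 + 2 * e by lia.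
have -> : (n + 3 * e) %% 3 = n %% 3 by lia.
by rewrite addbb addbF.
Qed.

Lemma t32_addn_mul3X k n e :
  t32 (n + 3 ^ k * e) (+) t32 n =
  t32 (iter k parent32 n + 2 ^ k * e) (+) t32 (iter k parent32 n).
Proof.
elim: k n e => [|k IH] n e; first by rewrite !mul1n.
by rewrite iterSr !expnS -!mulnA t32_addn_mul3 mulnCA IH mulnCA.
Qed.

Lemma iter_parent32_small k n : n <= k -> iter k parent32 n = 0.
Proof.
elim: k n => [|k IH] n le_nk; first by case: n le_nk.
by rewrite iterSr IH // /parent32; lia.
Qed.

Lemma t32_addn_mul3X_small k n e :
  n <= k -> t32 (n + 3 ^ k * e) (+) t32 n = t32 (2 ^ k * e).
Proof.
by move=> le_nk; rewrite t32_addn_mul3X iter_parent32_small // add0n addbF.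
Qed.

Lemma expn3_pow2 j : exists c, 3 ^ 2 ^ j = 1 + 2 ^ j.+1 * c.
Proof.
elim: j => [|j [c IH]]; first by exists 1.
exists (c + 2 ^ j * c * c).
rewrite expnSr expnM IH !expnS.
set P := 2 ^ j; nia.
Qed.

Lemma expn3_mul_pow2 j k : 3 ^ (2 ^ j * k) = 1 %[mod 2 ^ j].
Proof.
have [c E] := expn3_pow2 j.
rewrite expnM E -modnXm expnS mulnAC addnC modnMDl modnXm.
by rewrite exp1n.
Qed.

Lemma t32_false_mod j r : exists n, n = r %[mod 2 ^ j] /\ t32 n = false.
Proof.
set M := 2 ^ j; set r0 := r %% M.
have M_gt0 : 0 < M by rewrite expn_gt0.
have le_r0M : r0 <= M by rewrite ltnW // ltn_pmod.
set n1 := r0 + 3 ^ M * (2 ^ M * r0).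
set n2 := 3 ^ (2 * M) * r0.
have t_n1 : t32 n1 (+) t32 r0 = t32 n2.
  (* both sides equal t32 (2 ^ (2 * M) * r0) *)
  have := t32_addn_mul3X_small (2 * M) 0 r0 (leq0n _).
  rewrite add0n [t32 0]/= addbF => ->.
  by rewrite t32_addn_mul3X_small // mulnA -expnD addnn -mul2n.
have n1_r : n1 = r %[mod M].
  have dvd_M : M %| 3 ^ M * (2 ^ M * r0).
    by rewrite dvdn_mull // dvdn_mulr // dvdn_exp2l // ltnW // ltn_expl.
  by rewrite -modnDmr (eqP dvd_M) addn0 modn_mod.
have n2_r : n2 = r %[mod M].
  by rewrite -modnMml (mulnC 2 M) (expn3_mul_pow2 j 2) modnMml mul1n modn_mod.
have r0_r : r0 = r %[mod M] by rewrite modn_mod.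
case t_r0 : (t32 r0); last by exists r0.
case t_n2 : (t32 n2); last by exists n2.
by exists n1; rewrite t_r0 t_n2 in t_n1; case: (t32 n1) t_n1.
Qed.

Lemma mul3_add1_surj_mod j r : exists x, 3 * x + 1 = r %[mod 2 ^ j].
Proof.
set M := 2 ^ j.
have M_gt0 : 0 < M by rewrite expn_gt0.
have e3 : 3 ^ M = 1 %[mod M] by rewrite -(expn3_mul_pow2 j 1) muln1.
exists (3 ^ M.-1 * (r + M.-1)).
rewrite mulnA -expnS prednK // -modnDml -modnMml e3.
rewrite modnMml mul1n modnDml -addnA addn1 prednK //.
by rewrite modnDr.
Qed.

Lemma t32_mirror_step w p : p <= 3 * w + 1 ->
  t32 (3 * w + 1 - p) = t32 (2 * w - parent32 p) (+) t32 (parent32 p) (+) t32 p.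
Proof.
move=> le_p; rewrite (t32_rec (3 * w + 1 - p)) (t32_rec p) /parent32.
have -> : (2 * (3 * w + 1 - p)) %/ 3 = 2 * w - (2 * p) %/ 3 by lia.
have -> : ((3 * w + 1 - p) %% 3 == 2) = (p %% 3 == 2).
  by apply/eqP/eqP; lia.
by rewrite addbA addbK.
Qed.

Definition prefix_mirror (w : nat -> bool) (n S : nat) :=
  n <= S /\ forall p, p <= n -> w (S - p) = w p.

Lemma factor_rev_of_prefix_mirror (w : nat -> bool) :
  (forall n, exists S, prefix_mirror w n S) ->
  forall u, factor w u -> factor w (rev u).
Proof.
move=> mirror u [i ->]; move: (size u) => {u} m.
case: m => [|m]; first by exists 0.
have [S [le_S mirS]] := mirror (i + m).
exists (S - (i + m)).
apply: (@eq_from_nth _ false); rewrite size_rev !size_mkseq // => k lt_k.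
rewrite nth_rev ?size_mkseq // !nth_mkseq; [|lia|lia].
rewrite -(mirS (i + (m.+1 - k.+1))); last by lia.
by congr w; lia.
Qed.

Lemma t32_prefix_mirror n j r :
  exists S, S = r %[mod 2 ^ j] /\ prefix_mirror t32 n S.
Proof.
elim/ltn_ind: n j r => n IH j r.
case: (posnP n) => [->|n_gt0].
  have [S [S_r tS]] := t32_false_mod j r.
  exists S; split=> //; split=> // p.
  by rewrite leqn0 => /eqP ->; rewrite subn0.
have [x x_r] := mul3_add1_surj_mod j r.
have lt_n : parent32 n < n by rewrite /parent32; lia.
(* S' = 2x mod 2^(j+1) makes S' = 2w with 3w + 1 = r mod 2^j. *)
have [S' [S'_x [le_S' mirS']]] := IH _ lt_n j.+1 (2 * x).
have [w [S'E w_x]] : exists w, S' = 2 * w /\ w = x %[mod 2 ^ j].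
  exists (S' %/ 2 ^ j.+1 * 2 ^ j + x %% 2 ^ j).
  split; last by rewrite modnMDl modn_mod.
  rewrite {1}(divn_eq S' (2 ^ j.+1)) S'_x expnS -muln_modr; lia.
exists (3 * w + 1); split.
  by rewrite -x_r -modnDml -modnMmr w_x modnMmr modnDml.
split=> [|p le_pn]; first by rewrite /parent32 in le_S'; lia.
rewrite t32_mirror_step; last by rewrite /parent32 in le_S'; lia.
by rewrite -S'E mirS' ?addbb // /parent32; lia.
Qed.

Section Dekking.

Variable x : nat -> bool.
Hypothesis x_dekking : is_dekking x.

Lemma dekking_block k :
  [/\ x (3 * k) = x (2 * k), x (3 * k + 1) = ~~ x (2 * k)
    & x (3 * k + 2) = x (2 * k)].
Proof.
case: x_dekking => _ /(_ k).
by case: (x (2 * k)); case: (x (2 * k + 1)) => -[-> -> ->].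
Qed.

Lemma dekking_even k : x (2 * k) = t32 k.
Proof.
elim/ltn_ind: k => k IH.
case: (posnP k) => [->|k_gt0]; first by case: x_dekking.
have [m /andP[le_mk lt_km]] : exists m, 3 * m <= k < 3 * m + 3.
  by exists (k %/ 3); lia.
have [t3m t3m1 t3m2] := t32_rec3 m.
have : k = 3 * m \/ k = 3 * m + 1 \/ k = 3 * m + 2 by lia.
case=> [|[|]] k_def; rewrite k_def.
- have -> : 2 * (3 * m) = 3 * (2 * m) by lia.
  by have [-> _ _] := dekking_block (2 * m); rewrite IH ?t3m //; lia.
- have -> : 2 * (3 * m + 1) = 3 * (2 * m) + 2 by lia.
  by have [_ _ ->] := dekking_block (2 * m); rewrite IH ?t3m1 //; lia.
- have -> : 2 * (3 * m + 2) = 3 * (2 * m + 1) + 1 by lia.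
  by have [_ -> _] := dekking_block (2 * m + 1); rewrite IH ?t3m2 //; lia.
Qed.

Lemma dekking_t32 n : x n = t32 (n %/ 3) (+) (n %% 3 == 1).
Proof.
rewrite {1}(divn_eq n 3) mulnC.
have [xb0 xb1 xb2] := dekking_block (n %/ 3); rewrite -dekking_even.
have : n %% 3 = 0 \/ n %% 3 = 1 \/ n %% 3 = 2 by lia.
by case=> [|[|]] ->; rewrite ?addn0 ?xb0 ?xb1 ?xb2 ?addbF ?addbT.
Qed.

Lemma dekking_prefix_mirror n : exists S, prefix_mirror x n S.
Proof.
have [S [_ [le_S mirS]]] := t32_prefix_mirror (n %/ 3) 0 0.
exists (3 * S + 2); split=> [|p le_pn]; first by lia.
rewrite !dekking_t32.
have -> : (3 * S + 2 - p) %/ 3 = S - p %/ 3 by lia.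
have -> : ((3 * S + 2 - p) %% 3 == 1) = (p %% 3 == 1) by apply/eqP/eqP; lia.
by rewrite mirS //; lia.
Qed.

End Dekking.

Theorem proposition17 :
  (forall u : seq bool, factor t32 u -> factor t32 (rev u)) /\
  (forall x : nat -> bool, is_dekking x ->
     forall u : seq bool, factor x u -> factor x (rev u)).
Proof.
split.
- apply: factor_rev_of_prefix_mirror => n.
  by have [S [_ mirS]] := t32_prefix_mirror n 0 0; exists S.
- move=> x x_dekking; apply: factor_rev_of_prefix_mirror.
  exact: dekking_prefix_mirror.
Qed.
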